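(* If a set of tasks $\mathcal{S}\subseteq\mathcal{T}$ admits a feasible schedule on $C$ machines, then $\mu_m^C(\mathcal{S})\le C\cdot\tau_m$ for all $m\in\{0,1,\dots,L\}$.
   Context: Model: $C$ identical machines; finite task set $\mathcal{T}$. Task $T_i$ has workload $D_i\in\mathbb{Z}^+$, deadline $d_i\in\mathbb{Z}^+$, parallelism bound $k_i\in\mathbb{Z}^+$. Slots are $1,\dots,d$ with $d=\max_i d_i$. A feasible schedule of $\mathcal{S}$ on $C$ machines is a family of functions $y_i:\{1,\dots,d_i\}\to\{0,\dots,k_i\}$ ($T_i\in\mathcal{S}$) with $\sum_{t\le d_i}y_i(t)\ge D_i$ for all $T_i\in\mathcal{S}$ and $\sum_{T_i\in\mathcal{S}}y_i(t)\le C$ for every slot $t$. Let $len_j=\lceil D_j/k_j\rceil$; let $0=\tau_0<\tau_1<\dots<\tau_L=d$ where $\{\tau_1,\dots,\tau_L\}$ is the set of distinct deadlines of tasks in $\mathcal{T}$. For $m\in\{0,\dots,L\}$, $\lambda_m(\mathcal{S})=\sum_{T_j\in\mathcal{S},\,d_j>\tau_{L-m}} c_j^{(m)}$ with $c_j^{(m)}=D_j$ if $len_j\le d_j-\tau_{L-m}$ and $c_j^{(m)}=k_j(d_j-\tau_{L-m})$ otherwise. $\lambda_0^C(\mathcal{S})=0$ and $\lambda_m^C(\mathcal{S})=\lambda_{m-1}^C(\mathcal{S})+\min\{\lambda_m(\mathcal{S})-\lambda_{m-1}^C(\mathcal{S}),\ C(\tau_{L-m+1}-\tau_{L-m})\}$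 for $m\ge1$. Finally $\mu_m^C(\mathcal{S})=\sum_{T_j\in\mathcal{S}}D_j-\lambda_{L-m}^C(\mathcal{S})$. The condition in the claim is called the boundary condition. *)

From mathcomp Require Import all_boot all_order all_algebra.
Set Implicit Arguments. Unset Strict Implicit. Unset Printing Implicit Defensive.
Import Order.TTheory GRing.Theory Num.Theory.

(* Tasks are indexed by 'I_n; task i has workload D i, deadline d i,
   parallelism bound k i.  A subset of tasks is S : {set 'I_n}. *)
Section Sched.
Variables (n C : nat) (D d k : 'I_n -> nat).

(* Feasible schedule of S on C machines: y i t is the number of machines given
   to task i in slot t (only slots 1..d i matter for task i). *)
Definition feasible (S : {set 'I_n}) : Prop :=
  exists y : 'I_n -> nat -> nat,
    [/\ forall i, i \in S -> forall t, 1 <= t <= d i -> y i t <= k i,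
        forall i, i \in S -> D i <= \sum_(1 <= t < (d i).+1) y i t
      & forall t, 1 <= t <= \max_(i : 'I_n) d i ->
          \sum_(i in S | t <= d i) y i t <= C].

Definition taus : seq nat := sort leq (undup [seq d i | i <- enum 'I_n]).
Definition L : nat := size taus.
(* tau_0 = 0, tau_m = m-th smallest distinct deadline *)
Definition tau (m : nat) : nat := if m is m'.+1 then nth 0 taus m' else 0.

(* len_j = ceil (D_j / k_j) *)
Definition len (j : 'I_n) : nat := (D j + k j - 1) %/ k j.

Definition cj (m : nat) (j : 'I_n) : nat :=
  if len j <= d j - tau (L - m) then D j else k j * (d j - tau (L - m)).

Definition lambda (S : {set 'I_n}) (m : nat) : int :=
  (\sum_(j in S | tau (L - m) < d j) cj m j)%:Z.

Fixpoint lambdaC (S : {set 'I_n}) (m : nat) : int :=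
  match m with
  | 0 => 0
  | m'.+1 => (lambdaC S m' +
      Num.min (lambda S m'.+1 - lambdaC S m')
              (C * (tau (L - m') - tau (L - m'.+1)))%:Z)%R
  end.

Definition mu (S : {set 'I_n}) (m : nat) : int :=
  ((\sum_(j in S) D j)%:Z - lambdaC S (L - m))%R.
End Sched.

From mathcomp Require Import all_boot all_order all_algebra.
From mathcomp Require Import zify.
Set Implicit Arguments. Unset Strict Implicit. Unset Printing Implicit Defensive.
Import Order.TTheory GRing.Theory Num.Theory.

(* Fix a feasible schedule and let [residual th] be the work of the tasks of S
   still unfinished after slot th.  It vanishes at the last deadline, grows by
   at most C per slot when going back in time, and at a threshold th it is
   bounded by the work lambda attributes to the tasks with deadline after th,
   since such a task can be served by at most k_j machines per remaining slot.
   Going down the deadlines tau_L > tau_(L-1) > ..., these two bounds are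
   exactly the two arguments of the min in the recursion for lambdaC, so
   residual (tau_(L-m)) <= lambdaC_m.  Finally the whole workload is at most
   residual (tau_m) + C tau_m. *)

Lemma ler_addr_min (R : realDomainType) (a b c e : R) :
  (a <= b -> a <= c + e -> a <= c + Num.min (b - c) e)%R.
Proof. by move=> ab ace; rewrite -lerBlDl le_min lerD2r ab lerBlDl. Qed.

Section Deadlines.
Variables (n : nat) (d : 'I_n -> nat).

Lemma sorted_taus : sorted leq (taus d).
Proof. exact: (sort_sorted leq_total). Qed.

Lemma tau_monotone a b : a <= b -> b <= L d -> tau d a <= tau d b.
Proof.
case: a => [|a] //; case: b => [|b] // ab; rewrite /L => bL.
by apply: (sorted_leq_nth leq_trans leqnn 0 sorted_taus); rewrite ?inE; lia.
Qed.

Lemma deadline_le_last_tau j : d j <= tau d (L d).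
Proof.
have dj_in : d j \in taus d.
  by rewrite mem_sort mem_undup; apply: map_f; rewrite mem_enum.
have idx_lt : index (d j) (taus d) < size (taus d) by rewrite index_mem.
rewrite -(nth_index 0 dj_in) /L; move: idx_lt.
case E: (size (taus d)) => [|s] // idx_lt.
by apply: (sorted_leq_nth leq_trans leqnn 0 sorted_taus); rewrite ?inE ?E.
Qed.

End Deadlines.

Section Residual.
Variables (n C : nat) (D d k : 'I_n -> nat).
Variables (y : 'I_n -> nat -> nat) (S : {set 'I_n}).
Hypothesis y_le_k : forall i, i \in S -> forall t, 1 <= t <= d i -> y i t <= k i.
Hypothesis y_covers_D : forall i, i \in S -> D i <= \sum_(1 <= t < (d i).+1) y i t.
Hypothesis y_le_C : forall t, 1 <= t <= \max_(i : 'I_n) d i ->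
  \sum_(i in S | t <= d i) y i t <= C.

Definition work (j : 'I_n) (th : nat) : nat :=
  \sum_(1 <= t < th.+1 | t <= d j) y j t.

(* Truncated subtraction: a task that is already complete contributes 0. *)
Definition residual (th : nat) : nat := \sum_(j in S) (D j - work j th).

Lemma work_cat j th th' : th <= th' ->
  work j th' = work j th + \sum_(th.+1 <= t < th'.+1 | t <= d j) y j t.
Proof. by move=> le_th; rewrite /work (big_cat_nat _ (n := th.+1)). Qed.

Lemma residual0 : residual 0 = \sum_(j in S) D j.
Proof. by apply: eq_bigr => j _; rewrite /work big_geq // subn0. Qed.

Lemma residual_leq_add th th' : th <= th' ->
  residual th <= residual th' + C * (th' - th).
Proof.
move=> le_th.
have split_work j : D j - work j th <=
    (D j - work j th') + \sum_(th.+1 <= t < th'.+1 | t <= d j) y j t.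
  by rewrite (work_cat j le_th); lia.
rewrite /residual (leq_trans (leq_sum _ (fun j (_ : j \in S) => split_work j))) //.
rewrite big_split /= leq_add2l.
under eq_bigr do rewrite big_mkcond /=.
rewrite exchange_big /= -[C * _]mulnC -subSS -sum_nat_const_nat !big_nat.
apply: leq_sum => t /andP[lt_th _]; rewrite -big_mkcondr.
have [le_max | gt_max] := leqP t (\max_(i : 'I_n) d i).
  by apply: y_le_C; rewrite le_max andbT (leq_trans _ lt_th).
rewrite big_pred0 // => i; apply/negbTE/andP => -[_ le_di].
by move: (leq_trans le_di (leq_bigmax (F := d) i)); rewrite leqNgt gt_max.
Qed.

Lemma D_le_work_deadline j : j \in S -> D j <= work j (d j).
Proof.
move=> jS; apply: leq_trans (y_covers_D jS) _; rewrite /work [X in _ <= X]big_mkcond.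
by apply: eq_leq; apply: eq_big_nat => t /andP[_]; rewrite ltnS => ->.
Qed.

Lemma residual_task_eq0 j th : j \in S -> d j <= th -> D j - work j th = 0.
Proof.
move=> jS le_dj; apply/eqP; rewrite subn_eq0.
by rewrite (leq_trans (D_le_work_deadline jS)) // (work_cat j le_dj) leq_addr.
Qed.

Lemma residual_task_le j th : j \in S -> th < d j ->
  D j - work j th <= k j * (d j - th).
Proof.
move=> jS lt_dj; rewrite leq_subLR (leq_trans (D_le_work_deadline jS)) //.
rewrite (work_cat j (ltnW lt_dj)) leq_add2l -subSS mulnC -sum_nat_const_nat.
rewrite big_mkcond /= !big_nat; apply: leq_sum => t /andP[lt_th].
rewrite ltnS => le_t.
case: ifP => // _; apply: y_le_k => //.
by rewrite le_t andbT (leq_trans _ lt_th).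
Qed.

Lemma residual_last_tau : residual (tau d (L d)) = 0.
Proof.
by apply: big1 => j jS; apply: residual_task_eq0 => //; apply: deadline_le_last_tau.
Qed.

Lemma residual_le_lambda m : ((residual (tau d (L d - m)))%:Z <= lambda D d k S m)%R.
Proof.
rewrite /lambda /cj lez_nat; set th := tau d (L d - m).
rewrite /residual (bigID (fun j => th < d j)) /= [X in _ + X]big1 ?addn0.
  apply: leq_sum => j /andP[jS lt_th].
  by case: ifP => _; [apply: leq_subr | apply: residual_task_le].
by move=> j /andP[jS]; rewrite -leqNgt; apply: residual_task_eq0.
Qed.

Lemma residual_le_lambdaC m : m <= L d ->
  ((residual (tau d (L d - m)))%:Z <= lambdaC C D d k S m)%R.
Proof.
elim: m => [_ | m IH lt_mL]; first by rewrite subn0 residual_last_tau.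
have le_taus : tau d (L d - m.+1) <= tau d (L d - m) by apply: tau_monotone; lia.
apply: ler_addr_min; first exact: residual_le_lambda.
apply: le_trans (lerD (IH (ltnW lt_mL)) (lexx _)).
by rewrite -PoszD lez_nat residual_leq_add.
Qed.

End Residual.

Theorem lemma2 (n C : nat) (D d k : 'I_n -> nat)
  (hD : forall i, 0 < D i) (hd : forall i, 0 < d i) (hk : forall i, 0 < k i)
  (S : {set 'I_n}) :
  feasible C D d k S ->
  forall m : nat, m <= L d ->
    (mu C D d k S m <= (C * tau d m)%:Z)%R.
Proof.
case=> y [y_le_k y_covers_D y_le_C] m le_mL.
have residual_le := residual_le_lambdaC y_le_k y_covers_D y_le_C (leq_subr m (L d)).
rewrite subKn // in residual_le.
have total_le := residual_leq_add D y_le_C (leq0n (tau d m)).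
rewrite residual0 subn0 in total_le.
rewrite /mu lerBlDr; apply: le_trans (lerD (lexx _) residual_le).
by rewrite -PoszD lez_nat addnC.
Qed.
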